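(* In the compulsory constrained two-facility location setting described in the context, for every location profile $\mathbf{x}\in\mathbb{R}^n$ there exists an optimal solution for the sum cost objective (minimizing $\sum_{j=1}^n \max\{|y_1-x_j|,|y_2-x_j|\}$ over feasible $(y_1,y_2)$) that belongs to $AP$, i.e. whose two facility locations are $\{a_k,a_{k+1}\}$ for some $k$.
   Context: $n$ agents have locations $x_1,\dots,x_n\in\mathbb{R}$. $A=\{a_1\le a_2\le\dots\le a_m\}$ is a multiset of alternative locations, $m\ge2$; a feasible outcome places $F_1$ at $y_1\in A$ and $F_2$ at $y_2\in A\setminus\{y_1\}$ (removing one copy from the multiset). Each agent is served by both facilities, with cost $\max\{|y_1-x_j|,|y_2-x_j|\}$. $AP=\{(a_1,a_2),(a_2,a_3),\dots,(a_{m-1},a_m)\}$ (a pair is identified with placing the two facilities at its two entries, in either order). *)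

From mathcomp Require Import all_boot all_order all_algebra.
Set Implicit Arguments. Unset Strict Implicit. Unset Printing Implicit Defensive.
Import Order.TTheory GRing.Theory Num.Theory.
Local Open Scope ring_scope.

Definition agent_cost (R : realFieldType) (y1 y2 xj : R) : R :=
  Num.max `|y1 - xj| `|y2 - xj|.

Definition sum_cost (R : realFieldType) (n : nat) (x : 'I_n -> R) (y1 y2 : R) : R :=
  \sum_(j < n) agent_cost y1 y2 (x j).

(* The multiset A is a sorted seq; a feasible outcome uses two distinct
   copies (distinct positions) of A. *)
Definition feasible (R : realFieldType) (A : seq R) (y1 y2 : R) : Prop :=
  exists i j : nat, [/\ (i < size A)%N, (j < size A)%N, i <> j,
                        y1 = nth 0 A i & y2 = nth 0 A j].

Definition in_AP (R : realFieldType) (A : seq R) (y1 y2 : R) : Prop :=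
  exists k : nat, (k.+1 < size A)%N /\
    ((y1 = nth 0 A k /\ y2 = nth 0 A k.+1) \/
     (y1 = nth 0 A k.+1 /\ y2 = nth 0 A k)).

From mathcomp Require Import all_boot all_order all_algebra.
From mathcomp Require Import zify.
Import Order.TTheory GRing.Theory Num.Theory.
Local Open Scope ring_scope.

Set Implicit Arguments.
Unset Strict Implicit.
Unset Printing Implicit Defensive.

(* If a_i < a_j, the point a_(i+1) lies between them, so moving the second
   facility from a_j to a_(i+1) can only bring it closer to the farther of
   the two facilities for every agent: the pair (a_i, a_(i+1)) is at least as
   good as (a_i, a_j).  A cheapest adjacent pair is therefore optimal. *)

Lemma norm_between_le_max (R : realDomainType) (a b c : R) :
  a <= b <= c -> `|b| <= Num.max `|a| `|c|.
Proof.
case/andP=> le_ab le_bc; have [b_ge0 | b_lt0] := leP 0 b.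
- by rewrite ger0_norm // le_max (le_trans le_bc (ler_norm c)) orbT.
- by rewrite ltr0_norm // le_max ler_normr lerN2 le_ab orbT.
Qed.

Lemma agent_costC (R : realFieldType) (y1 y2 xj : R) :
  agent_cost y1 y2 xj = agent_cost y2 y1 xj.
Proof. exact: maxC. Qed.

Lemma sum_costC (R : realFieldType) (n : nat) (x : 'I_n -> R) (y1 y2 : R) :
  sum_cost x y1 y2 = sum_cost x y2 y1.
Proof. by apply: eq_bigr => j _; rewrite agent_costC. Qed.

Lemma agent_cost_between (R : realFieldType) (a b c xj : R) :
  a <= b <= c -> agent_cost a b xj <= agent_cost a c xj.
Proof.
move=> /andP[le_ab le_bc]; rewrite /agent_cost ge_max le_max lexx /=.
by apply: norm_between_le_max; rewrite !lerD2r le_ab le_bc.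
Qed.

Lemma sum_cost_between (R : realFieldType) (n : nat) (x : 'I_n -> R) (a b c : R) :
  a <= b <= c -> sum_cost x a b <= sum_cost x a c.
Proof. by move=> abc; apply: ler_sum => j _; exact: agent_cost_between. Qed.

Lemma sum_cost_adjacent_le (R : realFieldType) (n : nat) (x : 'I_n -> R)
    (A : seq R) (i j : nat) :
  sorted <=%R A -> (i < j < size A)%N ->
  sum_cost x (nth 0 A i) (nth 0 A i.+1) <= sum_cost x (nth 0 A i) (nth 0 A j).
Proof.
move=> sA /andP[lt_ij lt_jA]; have le_nth := le_sorted_leq_nth 0 sA.
by apply: sum_cost_between; rewrite !le_nth ?inE //=; lia.
Qed.

Lemma exists_argmin_ltn d (T : orderType d) (f : nat -> T) (m : nat) :
  (0 < m)%N -> exists2 k, (k < m)%N & forall i, (i < m)%N -> (f k <= f i)%O.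
Proof.
case: m => // m _.
case: (@arg_minP _ _ _ (ord0 : 'I_m.+1) xpredT (f \o val)) => // k _ k_min.
by exists (val k) => [|i lt_im]; [exact: ltn_ord | exact: (k_min (Ordinal lt_im))].
Qed.

Theorem lemma2 (R : realFieldType) (n : nat) (x : 'I_n -> R) (A : seq R)
    (hA : sorted <=%R A) (hm : (2 <= size A)%N) :
  exists y1 y2 : R,
    [/\ feasible A y1 y2, in_AP A y1 y2 &
        forall z1 z2 : R, feasible A z1 z2 ->
          sum_cost x y1 y2 <= sum_cost x z1 z2].
Proof.
have adjacent_pairs_gt0 : (0 < (size A).-1)%N by lia.
have [k lt_k k_min] := exists_argmin_ltn
  (fun k => sum_cost x (nth 0 A k) (nth 0 A k.+1)) adjacent_pairs_gt0.
have lt_k1 : (k.+1 < size A)%N by lia.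
have pair_cost_ge i j : (i < j < size A)%N ->
    sum_cost x (nth 0 A k) (nth 0 A k.+1) <= sum_cost x (nth 0 A i) (nth 0 A j).
  move=> ij_lt; apply: le_trans _ (sum_cost_adjacent_le x hA ij_lt).
  by apply: k_min; lia.
exists (nth 0 A k), (nth 0 A k.+1); split.
- by exists k, k.+1; split => //; lia.
- by exists k; split => //; left.
move=> z1 z2 [i [j [lt_i lt_j ne_ij -> ->]]].
have [lt_ij | lt_ji | eq_ij] := ltngtP i j.
- by apply: pair_cost_ge; rewrite lt_ij.
- by rewrite [leRHS]sum_costC; apply: pair_cost_ge; rewrite lt_ji.
- by [].
Qed.
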